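(* In the algebra $\mathbb C\langle\langle\mathbb C_n\rangle\rangle$ of noncommutative formal power series over the alphabet $\mathbb C_n$, $$\sum_{S\vDash n}\underline{M_S}=\sum_{E\subseteq\{1,\dots,n\}}A_{n-\#E}(0,1,1,\dots)\,\underline{\mathbb T_E},$$ where the left sum runs over all set partitions $S$ of $\{1,\dots,n\}$.
   Context: $\mathbb C_n=\{c_E\mid E\subseteq\{1,\dots,n\}\}$. For a family $S$ of pairwise disjoint nonempty subsets of $\{1,\dots,n\}$ (written $S\subset_{\vDash}E$ if all its members lie in $E$), $M_S=(\{c_\emptyset\}\cup\{c_s\mid s\in S\})^*$. For $E\subseteq\{1,\dots,n\}$, $\mathbb T_E=\bigcup_{S\subset_{\vDash}E}M_S$ (words encoding, column by column, saturated tableaux whose marked rows all lie in $E$). For a language $L$, $\underline{L}=\sum_{w\in L}w$ is its characteristic series. $A_k(0,1,1,\dots)$ is the complete Bell polynomial evaluated at $a_1=0$, $a_i=1$ ($i\ge2$), i.e. the number of set partitions of a $k$-element set with no singleton block ($A_0=1$); its exponential generating function is $\exp(e^t-1-t)$. *)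

From HB Require Import structures.
From mathcomp Require Import all_boot all_order all_algebra all_field.
Set Implicit Arguments. Unset Strict Implicit. Unset Printing Implicit Defensive.
Import Order.TTheory GRing.Theory Num.Theory.
Local Open Scope ring_scope.

(* The ground set {1,...,n} is modelled by 'I_n = {0,...,n-1}.
   The alphabet C_n = {c_E | E subset of {1..n}} is modelled by {set 'I_n}
   (the letter c_E is the set E itself). *)
Definition word (n : nat) := seq {set 'I_n}.

(* Noncommutative formal power series over C_n with complex coefficients
   (algC, the algebraic complex numbers, plays the role of C): a series is
   its coefficient function on words. *)
Definition series (n : nat) := word n -> algC.

Definition charser (n : nat) (L : pred (word n)) : series n :=
  fun w => if L w then 1 else 0.

(* M_S = ({c_emptyset} U {c_s | s in S})^* *)
Definition M_lang (n : nat) (S : {set {set 'I_n}}) : pred (word n) :=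
  fun w => all (fun c => (c == set0) || (c \in S)) w.

Definition subfam (n : nat) (S : {set {set 'I_n}}) (E : {set 'I_n}) : bool :=
  [&& trivIset S, set0 \notin S & [forall s in S, s \subset E]].

Definition T_lang (n : nat) (E : {set 'I_n}) : pred (word n) :=
  fun w => [exists S : {set {set 'I_n}}, subfam S E && M_lang S w].

Definition complete_bell (k : nat) (a : nat -> algC) : algC :=
  \sum_(P : {set {set 'I_k}} | partition P [set: 'I_k]) \prod_(B in P) a #|B|.

Definition A (k : nat) : algC :=
  complete_bell k (fun i => if i == 1%N then 0 else 1).

From HB Require Import structures.
From mathcomp Require Import all_boot all_order all_algebra all_field.
From Stdlib Require Import FunctionalExtensionality.
Import Order.TTheory GRing.Theory Num.Theory.
Set Implicit Arguments. Unset Strict Implicit. Unset Printing Implicit Defensive.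
Local Open Scope ring_scope.

(* For a word w let L be the set of its letters other than c_∅.  The word lies
   in M_S iff L ⊆ S, and in T_E iff L is a disjoint family with cover L ⊆ E; so
   both coefficients vanish unless L is disjoint.  Then the left coefficient
   counts the partitions of [n] containing L, i.e. the partitions of
   X = [n] \ cover L, while the right one is the sum of A_#F over the
   complements F ⊆ X of the sets E ⊇ cover L.  As A_k counts the
   singleton-free partitions of a k-set, it remains to split a partition of X
   into its singleton blocks and the singleton-free partition of the rest. *)

Lemma card_in_bij (aT rT : finType) (A : {set aT}) (B : {set rT})
    (f : aT -> rT) (g : rT -> aT) :
    {in A, forall x, f x \in B} -> {in B, forall y, g y \in A} ->
    {in A, cancel f g} -> {in B, cancel g f} -> #|A| = #|B|.
Proof.
move=> fAB gBA fK gK; rewrite -(card_in_imset (can_in_inj fK)); apply: eq_card => y.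
apply/imsetP/idP => [[x Ax ->]|By]; first exact: fAB.
by exists (g y); rewrite ?gBA ?gK.
Qed.

Lemma imset_preimset (aT rT : finType) (f : aT -> rT) (D : {set aT}) (B : {set rT}) :
  B \subset f @: D -> f @: (f @^-1: B) = B.
Proof.
move=> /subsetP BfD; apply/setP => y; apply/imsetP/idP => [[x]|yB].
  by rewrite inE => xB ->.
by have /imsetP[x _ eq_y] := BfD y yB; exists x; rewrite // inE -eq_y.
Qed.

Section Partitions.
Variable T : finType.
Implicit Types (P Q L : {set {set T}}) (D E : {set T}).

Lemma partition_cover P : trivIset P -> set0 \notin P -> partition P (cover P).
Proof. by move=> tP P0; rewrite /partition eqxx tP. Qed.

Lemma partition_singletons D : partition [set [set x] | x in D] D.
Proof.
apply/and3P; split.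
- rewrite cover_imset; apply/eqP/setP => x.
  by apply/bigcupP/idP => [[y yD /set1P ->] // | xD]; exists x; rewrite ?inE.
- apply/trivIsetP => _ _ /imsetP[x _ ->] /imsetP[y _ ->] neq.
  by rewrite disjoints1 inE; apply: contra neq => /eqP ->.
by apply/imsetP => -[x _ /setP/(_ x)]; rewrite !inE eqxx.
Qed.

Lemma partitionU P Q D E :
  partition P D -> partition Q E -> [disjoint D & E] -> partition (P :|: Q) (D :|: E).
Proof.
move=> /and3P[/eqP cP tP P0] /and3P[/eqP cQ tQ Q0] dDE.
rewrite /partition /cover bigcup_setU -/(cover P) -/(cover Q) cP cQ eqxx.
by rewrite trivIsetU ?cP ?cQ //= !inE negb_or P0.
Qed.

Lemma partition_setD P L D :
  partition P D -> L \subset P -> partition (P :\: L) (D :\: cover L).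
Proof.
move=> /and3P[/eqP cP tP P0] LP; rewrite /partition trivIsetD //= !inE negb_and P0 orbT andbT.
apply/eqP/setP => x; rewrite -cP inE; apply/bigcupP/andP => [[B /setDP[BP BL] xB]|].
  split; last by apply/bigcupP; exists B.
  apply/bigcupP => -[C CL xC]; move: BL.
  by rewrite -(def_pblock tP BP xB) (def_pblock tP (subsetP LP C CL) xC) CL.
move=> [xL /bigcupP[B BP xB]]; exists B => //; rewrite inE BP andbT.
by apply: contra xL => BL; apply/bigcupP; exists B.
Qed.

End Partitions.

Definition singleton_free (T : finType) (P : {set {set T}}) :=
  [forall B in P, #|B| != 1%N].

Definition nosing_partitions (T : finType) (D : {set T}) :=
  [set P : {set {set T}} | partition P D & singleton_free P].

Lemma card_nosing_partitions_imset (aT rT : finType) (f : aT -> rT) (D : {set aT}) :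
  injective f -> #|nosing_partitions (f @: D)| = #|nosing_partitions D|.
Proof.
move=> f_inj; rewrite -(card_in_imset (in2W (imset_inj (imset_inj f_inj)))).
apply: eq_card => Q; rewrite inE; apply/andP/imsetP => [[pQ /forall_inP Q1]|[P]].
  pose P := [set f @^-1: (B : {set rT}) | B in Q].
  have fPK : [set f @: (B : {set aT}) | B in P] = Q.
    rewrite -imset_comp -[RHS]imset_id; apply: eq_in_imset => B BQ /=.
    exact: imset_preimset (partitionS pQ BQ).
  exists P; rewrite // inE -(imset_partition _ _ f_inj) fPK pQ.
  apply/forall_inP => _ /imsetP[B BQ ->].
  rewrite -(card_imset _ f_inj) (imset_preimset (partitionS pQ BQ)).
  exact: Q1.
rewrite inE => /andP[pP /forall_inP P1] ->; split; first by rewrite imset_partition.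
apply/forall_inP => _ /imsetP[B BP ->].
by rewrite card_imset // P1.
Qed.

Lemma prod_bell_weight (T : finType) (P : {set {set T}}) :
  \prod_(B in P) (if #|B| == 1%N then 0 else 1 : algC) = (singleton_free P)%:R.
Proof.
have [P1|] := boolP (singleton_free P).
  by apply: big1 => B /(forall_inP P1)/negbTE ->.
by case/forall_inPn => B BP; rewrite negbK => B1; rewrite (bigD1 B) //= B1 mul0r.
Qed.

Lemma A_card_nosing_partitions_ord k : A k = #|nosing_partitions [set: 'I_k]|%:R.
Proof.
rewrite /A /complete_bell (eq_bigr _ (fun P _ => prod_bell_weight P)) -natr_sum.
by rewrite -big_mkcondr sum1dep_card.
Qed.

Lemma A_card_nosing_partitions (T : finType) (D : {set T}) :
  A #|D| = #|nosing_partitions D|%:R.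
Proof.
have imset_enum_val : @enum_val _ (mem D) @: setT = D.
  apply/setP => x; apply/imsetP/idP => [[i _ ->]|xD]; first exact: enum_valP.
  by exists (enum_rank_in xD x); rewrite ?inE ?enum_rankK_in.
rewrite A_card_nosing_partitions_ord -[in RHS]imset_enum_val.
by rewrite card_nosing_partitions_imset //; apply: enum_val_inj.
Qed.

Definition nosing_subpartitions (T : finType) (X : {set T}) :=
  [set Q : {set {set T}} |
     [&& trivIset Q, set0 \notin Q, singleton_free Q & cover Q \subset X]].

Lemma card_nosing_subpartitions (T : finType) (X : {set T}) :
  #|nosing_subpartitions X| = (\sum_(F : {set T} | F \subset X) #|nosing_partitions F|)%N.
Proof.
rewrite -sum1_card (partition_big (@cover T) (fun F => F \subset X)) /=; last first.
  by move=> Q; rewrite inE => /and4P[].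
apply: eq_bigr => F FX; rewrite -sum1_card; apply: eq_bigl => Q.
rewrite !inE /partition; apply/andP/andP => [[/and4P[tQ Q0 Q1 _] /eqP <-]|].
  by rewrite eqxx tQ Q0.
by case=> /and3P[/eqP cQ tQ Q0] Q1; rewrite tQ Q0 Q1 cQ FX.
Qed.

Section SingletonBlocks.
Variables (T : finType) (X : {set T}).
Implicit Types (P Q : {set {set T}}).

Definition drop_singletons P := [set B in P | #|B| != 1%N].

Definition add_singletons Q := Q :|: [set [set x] | x in X :\: cover Q].

Lemma drop_singletons_sub P : drop_singletons P \subset P.
Proof. by apply/subsetP => B; rewrite inE => /andP[]. Qed.

Lemma drop_singletons_subpartition P :
  partition P X -> drop_singletons P \in nosing_subpartitions X.
Proof.
move=> pP; rewrite inE (trivIsetS (drop_singletons_sub P) (partition_trivIset pP)) /=.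
rewrite inE (partition0 pP) /=; apply/andP; split.
  by apply/forall_inP => B; rewrite inE => /andP[].
rewrite -(cover_partition pP); apply/bigcupsP => B /(subsetP (drop_singletons_sub P)) BP.
exact: bigcup_sup.
Qed.

Lemma set1_in_partition P x : partition P X -> x \in X ->
  ([set x] \in P) = (x \notin cover (drop_singletons P)).
Proof.
move=> pP xX; have tP := partition_trivIset pP.
have xP : x \in cover P by rewrite (cover_partition pP).
apply/idP/idP => [xinP|].
  apply/bigcupP => -[B]; rewrite inE => /andP[BP B1] xB.
  by move: B1; rewrite -(def_pblock tP BP xB) (def_pblock tP xinP (set11 x)) cards1.
apply: contraNT => xnotP; apply/bigcupP; exists (pblock P x); rewrite ?mem_pblock //.
rewrite inE pblock_mem //=; apply: contra xnotP => /cards1P[y def_y].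
have /set1P xy : x \in [set y] by rewrite -def_y mem_pblock.
by rewrite {1}xy -def_y pblock_mem.
Qed.

Lemma drop_singletonsK : {in [set P | partition P X], cancel drop_singletons add_singletons}.
Proof.
move=> P; rewrite inE => pP; apply/setP => B; rewrite !inE.
apply/orP/idP => [[/andP[] // | /imsetP[x]]|BP].
  by rewrite inE => /andP[xnotP xX] ->; rewrite set1_in_partition.
have [/eqP/cards1P[x def_B] | B1] := eqVneq #|B| 1%N; last by left; rewrite BP.
have xX : x \in X by rewrite (subsetP (partitionS pP BP)) // def_B set11.
right; apply/imsetP; exists x => //.
by rewrite inE -set1_in_partition // -def_B BP.
Qed.

Lemma add_singletons_partition Q :
  Q \in nosing_subpartitions X -> partition (add_singletons Q) X.
Proof.
rewrite inE => /and4P[tQ Q0 _ QX].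
have -> : X = cover Q :|: (X :\: cover Q).
  apply/setP => x; rewrite in_setU in_setD.
  by case: (boolP (x \in cover Q)) => //= /(subsetP QX) ->.
apply: partitionU; rewrite ?partition_cover ?partition_singletons //.
by rewrite disjoint_sym disjoints_subset setDE subsetIr.
Qed.

Lemma add_singletonsK : {in nosing_subpartitions X, cancel add_singletons drop_singletons}.
Proof.
move=> Q; rewrite inE => /and4P[_ _ /forall_inP Q1 _]; apply/setP => B; rewrite !inE.
apply/andP/idP => [[/orP[// | /imsetP[x _ ->]]]|BQ]; first by rewrite cards1.
by rewrite BQ Q1.
Qed.

Lemma card_partitions_nosing_subpartitions :
  #|[set P | partition P X]| = #|nosing_subpartitions X|.
Proof.
apply: (card_in_bij (f := drop_singletons) (g := add_singletons)).
- by move=> P; rewrite inE; apply: drop_singletons_subpartition.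
- by move=> Q /add_singletons_partition; rewrite inE.
- exact: drop_singletonsK.
- exact: add_singletonsK.
Qed.

End SingletonBlocks.

Lemma card_partitions_containing (T : finType) (L : {set {set T}}) :
  trivIset L -> set0 \notin L ->
  #|[set S | partition S [set: T] & L \subset S]| = #|[set P | partition P (~: cover L)]|.
Proof.
move=> tL L0; apply: (card_in_bij (f := fun S => S :\: L) (g := fun P => L :|: P)).
- by move=> S; rewrite !inE => /andP[pS LS]; rewrite -setTD partition_setD.
- move=> P; rewrite !inE subsetUl andbT -(setUCr (cover L)) => pP.
  by apply: partitionU; rewrite ?partition_cover // disjoints_subset setCK.
- move=> S; rewrite inE => /andP[_ /subsetP LS]; apply/setP => B; rewrite !inE.
  by case: (boolP (B \in L)) => // /LS.
move=> P; rewrite inE => pP; rewrite setDUl setDv set0U; apply/setDidPl.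
rewrite disjoints_subset; apply/subsetP => B BP; rewrite inE; apply/negP => BL.
have /set0Pn[x xB] := partition_neq0 pP BP.
by have := subsetP (partitionS pP BP) x xB; rewrite inE (subsetP (bigcup_sup B BL)).
Qed.

Definition letters n (w : word n) : {set {set 'I_n}} := [set c | (c \in w) && (c != set0)].

Lemma set0_notin_letters n (w : word n) : set0 \notin letters w.
Proof. by rewrite inE eqxx andbF. Qed.

Lemma M_lang_letters n (S : {set {set 'I_n}}) (w : word n) :
  M_lang S w = (letters w \subset S).
Proof.
rewrite /M_lang; apply/allP/subsetP => [Sw c|Lw c cw].
  by rewrite inE => /andP[/Sw /orP[/eqP ->|//]]; rewrite eqxx.
by case: eqVneq => //= c0; apply: Lw; rewrite inE cw c0.
Qed.

Lemma T_lang_letters n (E : {set 'I_n}) (w : word n) :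
  T_lang E w = trivIset (letters w) && (cover (letters w) \subset E).
Proof.
apply/existsP/andP => [[S /andP[/and3P[tS _ /forall_inP SE]]]|[tL LE]].
  rewrite M_lang_letters => LS; rewrite (trivIsetS LS tS); split=> //.
  by apply/bigcupsP => c /(subsetP LS) /SE.
exists (letters w); rewrite M_lang_letters subxx andbT /subfam tL set0_notin_letters.
by apply/forall_inP => c cL; apply: subset_trans LE; apply: bigcup_sup.
Qed.

Theorem proposition1 (n : nat) :
  (fun w : word n =>
     \sum_(S : {set {set 'I_n}} | partition S [set: 'I_n]) charser (M_lang S) w)
  =
  (fun w : word n =>
     \sum_(E : {set 'I_n}) A (n - #|E|) * charser (T_lang E) w).
Proof.
apply: functional_extensionality => w; set L := letters w.
rewrite /charser; under eq_bigr do rewrite M_lang_letters.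
under [RHS]eq_bigr do rewrite T_lang_letters -/L.
rewrite -big_mkcondr sumr_const -/L.
rewrite (eq_card (B := [set S | partition S setT & L \subset S])) => [|S]; last by rewrite inE.
have [tL | ntL] := boolP (trivIset L); last first.
  rewrite big1 => [|E _]; last by rewrite mulr0.
  apply/eqP; rewrite pnatr_eq0 cards_eq0; apply/eqP/setP => S; rewrite !inE.
  by apply: contraNF ntL => /andP[pS LS]; apply: trivIsetS LS (partition_trivIset pS).
rewrite card_partitions_containing ?set0_notin_letters //.
rewrite card_partitions_nosing_subpartitions card_nosing_subpartitions natr_sum.
under [RHS]eq_bigr => E _ do rewrite /= (fun_if (GRing.mul _)) mulr1 mulr0.
rewrite -big_mkcond (reindex_inj (@setC_inj _)) /=.
apply: eq_big => [E | E _]; first by rewrite setCS.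
by rewrite -A_card_nosing_partitions cardsCs setCK card_ord.
Qed.
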